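(* Let $s\ge 0$ be a fixed integer (independent of $N$). For every integer $N$ with $s<N-2$, set $n=N-s$ and let $\mathcal{X}_n=\{x_j\}_{j=0}^n$ be any subset with $n+1$ elements of the Chebyshev points of the second kind $\{\cos\frac{k\pi}{N}\}_{k=0}^N$, ordered so that $x_0>x_1>\dots>x_n$. Then the family $(\mathcal{X}_n)$ is a family of well-spaced points with constants $C=\frac{\pi^2(s+1)}{2}$ and $R=\frac{(s+1)(s+3)\pi^2}{4}$; that is, for every such $\mathcal{X}_n$: (1) $\frac{x_{k+1}-x_k}{x_{k+1}-x_j}\le \frac{C}{k+1-j}$ for $0\le j\le k$, $0\le k\le n-1$; (2) $\frac{x_{k+1}-x_k}{x_j-x_k}\le\frac{C}{j-k}$ for $k+1\le j\le n$, $0\le k\le n-1$; (3) $\frac1R\le \frac{x_{k+1}-x_k}{x_k-x_{k-1}}\le R$ for $1\le k\le n-1$. Moreover, the Lebesgue constant of Berrut's rational interpolant on $\mathcal{X}_n$ satisfies $$\Lambda_n\le\Big(\frac{(s+1)(s+3)\pi^2}{4}+1\Big)\big(1+\pi^2(s+1)\ln(N-s)\big).$$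
   Context: Berrut's rational interpolant on distinct nodes $x_0,\dots,x_n$ has basis functions $\ell_i(x)=\dfrac{(-1)^i/(x-x_i)}{\sum_{j=0}^n (-1)^j/(x-x_j)}$, $i=0,\dots,n$. Its Lebesgue constant on $[-1,1]$ is $\Lambda_n=\max_{x\in[-1,1]}\sum_{i=0}^n|\ell_i(x)|$. A family of ordered node sets $(\mathcal{X}_n)_n$ is called well-spaced if there exist constants $C,R\ge 1$ independent of $n$ such that conditions (1)–(3) in the claim hold for every set in the family. *)

From Stdlib Require Import Reals Lra Lia.
From Coquelicot Require Import Coquelicot.
Open Scope R_scope.

Fixpoint is_nodeb (x : nat -> R) (n : nat) (t : R) : bool :=
  match n with
  | O => if Req_EM_T t (x O) then true else false
  | S m => if Req_EM_T t (x (S m)) then true else is_nodeb x m t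
  end.

(* Berrut's basis function l_i on the nodes x 0 > ... > x n:
   l_i(t) = ((-1)^i/(t - x_i)) / sum_{j=0}^n (-1)^j/(t - x_j)  for t not a node,
   extended (continuously, i.e. by the interpolation property) to the nodes:
   l_i(x_i) = 1 and l_i(x_m) = 0 for m <> i. *)
Definition berrut_basis (x : nat -> R) (n i : nat) (t : R) : R :=
  if Req_EM_T t (x i) then 1
  else if is_nodeb x n t then 0
  else ((-1) ^ i / (t - x i)) / sum_f_R0 (fun j => (-1) ^ j / (t - x j)) n.

Definition lebesgue_function (x : nat -> R) (n : nat) (t : R) : R :=
  sum_f_R0 (fun i => Rabs (berrut_basis x n i t)) n.

Definition lebesgue_constant (x : nat -> R) (n : nat) : Rbar :=
  Lub_Rbar (fun y => exists t, -1 <= t <= 1 /\ y = lebesgue_function x n t).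

From Stdlib Require Import Reals Lra Lia Psatz Arith Classical IndefiniteDescription.
From Coquelicot Require Import Coquelicot.
Open Scope R_scope.

(* Write x_j = cos (p_j PI / N) with p increasing and p_j <= j + s, so consecutive
   indices differ by at most s+1.  By cos a - cos b = 2 sin ((a+b)/2) sin ((b-a)/2)
   and Jordan's inequality, every gap x_i - x_j is, up to the factors 8/PI^2 and 2,
   equal to min(p_i+p_j, 2N-p_i-p_j) (p_j-p_i) u^2 with u = PI/(2N).  Elementary
   integer inequalities on these weights give conditions (1) and the upper half of
   (3); the reflection x_j -> -x_{n-j}, which maps Chebyshev subsets to Chebyshev
   subsets, turns them into (2) and the lower half of (3).

   For the Lebesgue function, off the nodes it equals the ratio
   sum_i 1/|t-x_i| / |sum_j (-1)^j/(t-x_j)|.  The denominator is an alternating sum,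
   bounded below by its terms next to t; the numerator is compared term by term with
   the well-spacing conditions, giving a harmonic, hence logarithmic, sum when t lies
   between two nodes.  Outside the hull of the nodes we use the explicit position of
   the Chebyshev points relative to the endpoints +-1.  Again reflection halves the
   case analysis. *)

Lemma PI_gt_3 : 3 < PI.
Proof. pose proof PI2_3_2; lra. Qed.

Lemma Rdiv_le_cross a b c d : 0 < b -> 0 < d -> a * d <= c * b -> a / b <= c / d.
Proof.
  intros Hb Hd H. apply Rmult_le_reg_r with (b * d); [nra|].
  replace (a / b * (b * d)) with (a * d) by (field; lra).
  replace (c / d * (b * d)) with (c * b) by (field; lra). exact H.
Qed.

Lemma sin_ge_taylor3 a : 0 <= a <= 2 -> a - a ^ 3 / 6 <= sin a.
Proof.
  intros Ha. destruct (pre_sin_bound a 1 ltac:(lra) ltac:(lra)) as [H _].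
  unfold sin_approx, sin_term in H; simpl in H; unfold INR in H.
  assert (a ^ 5 / 120 - a ^ 7 / 5040 >= 0); [|nra].
  assert (0 <= a ^ 5) by (apply pow_le; lra).
  replace (a ^ 7) with (a ^ 5 * a ^ 2) by ring.
  assert (a ^ 2 <= 4) by nra. nra.
Qed.

Lemma cos_ge_taylor2 a : 0 <= a <= 2 -> 1 - a ^ 2 / 2 <= cos a.
Proof.
  intros Ha. destruct (pre_cos_bound a 1 ltac:(lra) ltac:(lra)) as [H _].
  unfold cos_approx, cos_term in H; simpl in H; unfold INR in H.
  assert (a ^ 4 / 24 - a ^ 6 / 720 >= 0); [|nra].
  assert (0 <= a ^ 4) by (apply pow_le; lra).
  replace (a ^ 6) with (a ^ 4 * a ^ 2) by ring.
  assert (a ^ 2 <= 4) by nra. nra.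
Qed.

Lemma jordan y : 0 <= y <= PI / 2 -> 2 / PI * y <= sin y.
Proof.
  intros Hy. pose proof PI_gt_3. pose proof PI_4.
  destruct (Rle_dec y (6 / 5)) as [Hsmall | Hlarge].
  - pose proof (sin_ge_taylor3 y ltac:(lra)).
    assert (2 / PI <= 2 / 3) by (apply Rdiv_le_cross; lra). nra.
  - pose proof (cos_ge_taylor2 (PI / 2 - y) ltac:(lra)).
    replace y with (PI / 2 - (PI / 2 - y)) at 2 by ring. rewrite sin_shift.
    assert (1 / 2 <= 2 / PI) by (apply Rdiv_le_cross; lra).
    replace (2 / PI * y) with (1 - 2 / PI * (PI / 2 - y)) by (field; lra). nra.
Qed.

Lemma sin_le_id y : 0 <= y -> sin y <= y.
Proof.
  intros Hy. destruct (Req_dec y 0) as [-> | Hne].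
  - rewrite sin_0; lra.
  - left; apply sin_lt_x; lra.
Qed.

Lemma inv_le_ln_diff m : 2 <= m -> 1 / m <= ln m - ln (m - 1).
Proof.
  intros Hm. assert (Hinv : 1 / m <= 1 / 2) by (apply Rdiv_le_cross; lra).
  replace (m - 1) with (m * (1 - 1 / m)) by (field; lra).
  rewrite ln_mult by lra.
  assert (ln (1 - 1 / m) <= - (1 / m)); [|lra].
  rewrite <- (ln_exp (- (1 / m))). apply Rcomplements.ln_le; [lra|].
  pose proof (exp_ineq1_le (- (1 / m))); lra.
Qed.

(* Needed to absorb additive constants into the ln n term for n >= 3. *)
Lemma one_le_ln3 : 1 <= ln 3.
Proof. rewrite <- ln_exp at 1. apply Rcomplements.ln_le; [apply exp_pos | apply exp_le_3]. Qed.

Lemma inv_le_swap r c : 0 < r -> 0 < c -> 1 / r <= c -> 1 / c <= r.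
Proof.
  intros Hr Hc H. replace r with (r / 1) by field. apply Rdiv_le_cross; [lra | lra |].
  apply Rmult_le_compat_r with (r := r) in H; [|lra].
  replace (1 / r * r) with 1 in H by (field; lra). lra.
Qed.

(* Moving t towards a node far away changes relative distances monotonically. *)
Lemma ratio_shift_le d e a : 0 < d <= e -> 0 <= a -> d / (a + d) <= e / (a + e).
Proof. intros. apply Rdiv_le_cross; nra. Qed.

(* Same monotonicity when t moves away from a farther node, t staying in the first
   half of the gap of length h. *)
Lemma ratio_shift_half_le d h e : 0 < d -> d <= h / 2 -> h <= e -> d / (e - d) <= h / e.
Proof. intros. apply Rdiv_le_cross; nra. Qed.

Lemma sum_le_telescope (f F : nat -> R) n :
  (forall i, (i <= n)%nat -> f i <= F (S i) - F i) -> sum_f_R0 f n <= F (S n) - F O.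
Proof.
  induction n as [|n IH]; intros H; simpl.
  - apply H; lia.
  - pose proof (H (S n) ltac:(lia)). specialize (IH ltac:(intros; apply H; lia)). lra.
Qed.

(* Comparison with a telescoping sum with half-integer shifts:
   P^2 * sum_{i<=n} 1/(P+i)^2 <= P^2/(P-1/2) <= P+1. *)
Lemma sum_inv_sqr_shift P n : 1 <= P ->
  P ^ 2 * sum_f_R0 (fun i => 1 / (P + INR i) ^ 2) n <= P + 1.
Proof.
  intros HP.
  assert (Hsum : sum_f_R0 (fun i => 1 / (P + INR i) ^ 2) n <= 1 / (P - 1 / 2)).
  { eapply Rle_trans; [apply (sum_le_telescope _ (fun i => - (1 / (P + INR i - 1 / 2))))|].
    - intros i _. rewrite S_INR. pose proof (pos_INR i).
      replace (- (1 / (P + (INR i + 1) - 1 / 2)) - - (1 / (P + INR i - 1 / 2)))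
        with (1 / ((P + INR i) ^ 2 - 1 / 4)) by (field; repeat split; nra).
      apply Rdiv_le_cross; nra.
    - rewrite S_INR. simpl INR. pose proof (pos_INR n).
      assert (0 <= 1 / (P + (INR n + 1) - 1 / 2)) by (apply Rdiv_le_0_compat; lra).
      replace (P + 0 - 1 / 2) with (P - 1 / 2) by ring. lra. }
  eapply Rle_trans; [apply Rmult_le_compat_l; [nra | exact Hsum]|].
  replace (P ^ 2 * (1 / (P - 1 / 2))) with (P ^ 2 / (P - 1 / 2)) by (field; lra).
  apply Rmult_le_reg_r with (P - 1 / 2); [lra|].
  replace (P ^ 2 / (P - 1 / 2) * (P - 1 / 2)) with (P ^ 2) by (field; lra). nra.
Qed.

Lemma sum_f_R0_reverse (f : nat -> R) n :
  sum_f_R0 f n = sum_f_R0 (fun i => f (n - i)%nat) n.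
Proof.
  revert f; induction n as [|n IH]; intros f; [reflexivity|].
  rewrite decomp_sum by lia. simpl pred. rewrite (IH (fun i => f (S i))), tech5.
  replace (S n - S n)%nat with O by lia. rewrite Rplus_comm. f_equal.
  apply sum_eq; intros i Hi. f_equal; lia.
Qed.

Lemma pow_m1_sqr m : (-1) ^ m * (-1) ^ m = 1.
Proof. rewrite <- pow_add. replace (m + m)%nat with (2 * m)%nat by lia. apply pow_1_even. Qed.

Lemma pow_m1_complement j n : (j <= n)%nat -> (-1) ^ j = (-1) ^ n * (-1) ^ (n - j).
Proof.
  intros Hj. replace n with ((n - j) + j)%nat at 1 by lia. rewrite pow_add.
  pose proof (pow_m1_sqr (n - j)).
  transitivity ((-1) ^ (n - j) * (-1) ^ (n - j) * (-1) ^ j); [rewrite H|]; ring.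
Qed.

Lemma sum_f_R0_nonneg (f : nat -> R) n :
  (forall i, (i <= n)%nat -> 0 <= f i) -> 0 <= sum_f_R0 f n.
Proof.
  intros H. apply Rle_trans with (sum_f_R0 (fun _ => 0) n).
  - right; symmetry; apply sum_eq_R0; reflexivity.
  - apply sum_Rle; auto.
Qed.

Lemma alternating_sum_bounds M (b : nat -> R) :
  (forall i, (i < M)%nat -> b (S i) <= b i) -> (forall i, (i <= M)%nat -> 0 <= b i) ->
  let T := sum_f_R0 (fun i => (-1) ^ i * b i) M in
  0 <= T <= b O /\ ((1 <= M)%nat -> b O - b 1%nat <= T).
Proof.
  revert b; induction M as [|M IH]; intros b Hdec Hpos T.
  - unfold T; simpl. pose proof (Hpos O ltac:(lia)). split; [lra | lia].
  - destruct (IH (fun i => b (S i))) as [[Hlo Hhi] _];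
      [intros; apply Hdec; lia | intros; apply Hpos; lia |].
    assert (HT : T = b O - sum_f_R0 (fun i => (-1) ^ i * b (S i)) M).
    { unfold T. rewrite decomp_sum by lia. simpl pred.
      replace (sum_f_R0 (fun i => (-1) ^ S i * b (S i)) M)
        with (-1 * sum_f_R0 (fun i => (-1) ^ i * b (S i)) M).
      - simpl; ring.
      - rewrite scal_sum. apply sum_eq; intros i _. simpl; ring. }
    pose proof (Hdec O ltac:(lia)). pose proof (Hpos O ltac:(lia)).
    split; [|intros]; lra.
Qed.

(* Splitting an alternating sum at k < n and renormalising the signs, so that both
   pieces start with a positive term next to position k. *)
Lemma alternating_sum_split (f : nat -> R) k n : (k < n)%nat ->
  (-1) ^ (S k) * sum_f_R0 (fun j => (-1) ^ j * f j) n =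
  sum_f_R0 (fun i => (-1) ^ i * - f (k - i)%nat) k +
  sum_f_R0 (fun i => (-1) ^ i * f (S k + i)%nat) (n - S k).
Proof.
  intros Hk. rewrite (tech2 _ k n Hk), Rmult_plus_distr_l, sum_f_R0_reverse, !scal_sum.
  f_equal; apply sum_eq; intros i Hi.
  - rewrite (pow_m1_complement i k Hi). simpl. ring.
  - rewrite pow_add. pose proof (pow_m1_sqr (S k)) as Hsq.
    transitivity ((-1) ^ S k * (-1) ^ S k * ((-1) ^ i * f (S k + i)%nat)); [ring|].
    rewrite Hsq; ring.
Qed.

Lemma decreasing_nodes (x : nat -> R) n :
  (forall i, (i < n)%nat -> x (S i) < x i) -> forall i j, (i < j <= n)%nat -> x j < x i.
Proof.
  intros Hx i j Hij. induction j as [|j IH]; [lia|].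
  destruct (Nat.eq_dec i j) as [-> | Hne]; [apply Hx; lia|].
  pose proof (Hx j ltac:(lia)). specialize (IH ltac:(lia)). lra.
Qed.

(* The Lebesgue function of Berrut's interpolant away from the nodes. *)
Definition berrut_ratio (x : nat -> R) (n : nat) (t : R) : R :=
  sum_f_R0 (fun i => 1 / Rabs (t - x i)) n /
  Rabs (sum_f_R0 (fun j => (-1) ^ j / (t - x j)) n).

Lemma is_nodeb_true x n t m : (m <= n)%nat -> t = x m -> is_nodeb x n t = true.
Proof.
  induction n as [|n IH]; intros Hm Ht; simpl.
  - replace m with O in Ht by lia. destruct (Req_EM_T t (x O)); congruence.
  - destruct (Req_EM_T t (x (S n))); [reflexivity|].
    destruct (Nat.eq_dec m (S n)) as [-> | Hne]; [congruence | apply IH; auto; lia].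
Qed.

Lemma is_nodeb_false x n t : (forall i, (i <= n)%nat -> t <> x i) -> is_nodeb x n t = false.
Proof.
  induction n as [|n IH]; intros H; simpl.
  - destruct (Req_EM_T t (x O)) as [E|_]; [destruct (H O (le_n _) E) | reflexivity].
  - destruct (Req_EM_T t (x (S n))) as [E|_]; [destruct (H (S n) (le_n _) E)|].
    apply IH; intros; apply H; lia.
Qed.

(* Interpolation property: at a node exactly one basis function is nonzero. *)
Lemma lebesgue_function_at_node x n m :
  (forall i j, (i < j <= n)%nat -> x j < x i) -> (m <= n)%nat ->
  lebesgue_function x n (x m) = 1.
Proof.
  intros Hx Hm. unfold lebesgue_function.
  transitivity (sum_f_R0 (fun i => if Nat.eq_dec i m then 1 else 0) n).
  - apply sum_eq; intros i Hi. unfold berrut_basis.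
    destruct (Req_EM_T (x m) (x i)) as [E | E]; destruct (Nat.eq_dec i m) as [-> | Hne].
    + apply Rabs_R1.
    + destruct (Nat.lt_total i m) as [Hlt | [Heq | Hgt]];
        [pose proof (Hx i m ltac:(lia)) | lia | pose proof (Hx m i ltac:(lia))]; lra.
    + congruence.
    + rewrite (is_nodeb_true x n (x m) m Hm eq_refl). apply Rabs_R0.
  - clear Hx. induction n as [|n IH].
    + replace m with O by lia. reflexivity.
    + rewrite tech5. destruct (Nat.eq_dec (S n) m) as [<- | Hne].
      * replace (sum_f_R0 _ n) with 0; [ring|].
        symmetry; apply sum_eq_R0; intros i Hi. destruct (Nat.eq_dec i (S n)); [lia | reflexivity].
      * rewrite IH by lia. ring.
Qed.

Lemma lebesgue_function_off_nodes x n t : (forall i, (i <= n)%nat -> t <> x i) ->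
  lebesgue_function x n t = berrut_ratio x n t.
Proof.
  intros Ht. unfold lebesgue_function, berrut_ratio, Rdiv at 1.
  rewrite Rmult_comm, scal_sum. apply sum_eq; intros i Hi. unfold berrut_basis.
  destruct (Req_EM_T t (x i)) as [E | _]; [destruct (Ht i Hi E)|].
  rewrite (is_nodeb_false x n t Ht). unfold Rdiv.
  rewrite !Rabs_mult, !Rabs_inv, pow_1_abs. ring.
Qed.

Lemma Lub_Rbar_le_Finite (E : R -> Prop) b : (forall y, E y -> y <= b) -> Rbar_le (Lub_Rbar E) (Finite b).
Proof. intros H. apply (proj2 (Lub_Rbar_correct E)). intros y Hy. exact (H y Hy). Qed.

Lemma node_bracket (x : nat -> R) n t : (forall i, (i <= n)%nat -> t <> x i) ->
  x n < t < x O -> exists k, (k < n)%nat /\ x (S k) < t < x k.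
Proof.
  intros Hnode Ht.
  assert (Hm : forall m, (m <= n)%nat -> t < x m \/ exists k, (k < m)%nat /\ x (S k) < t < x k).
  { induction m as [|m IH]; intros Hm; [left; lra|].
    destruct (IH ltac:(lia)) as [Hlt | [k [Hk Hkt]]].
    - destruct (Rtotal_order t (x (S m))) as [Hlt' | [Heq | Hgt]].
      + left; exact Hlt'.
      + destruct (Hnode (S m) Hm Heq).
      + right; exists m; split; [lia | lra].
    - right; exists k; split; [lia | exact Hkt]. }
  destruct (Hm n (le_n n)) as [Hlt | [k [Hk Hkt]]]; [lra | exists k; auto].
Qed.

Lemma berrut_ratio_reflect x n t :
  berrut_ratio (fun j => - x (n - j)%nat) n (- t) = berrut_ratio x n t.
Proof.
  unfold berrut_ratio. f_equal.
  - rewrite (sum_f_R0_reverse (fun i => 1 / Rabs (t - x i))). apply sum_eq; intros i _.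
    replace (- t - - x (n - i)%nat) with (- (t - x (n - i)%nat)) by ring.
    rewrite Rabs_Ropp. reflexivity.
  - rewrite (sum_f_R0_reverse (fun j => (-1) ^ j / (t - x j))).
    replace (sum_f_R0 (fun j => (-1) ^ j / (- t - - x (n - j)%nat)) n)
      with (- (-1) ^ n * sum_f_R0 (fun j => (-1) ^ (n - j) / (t - x (n - j)%nat)) n).
    + rewrite Rabs_mult, Rabs_Ropp, pow_1_abs. ring.
    + rewrite scal_sum. apply sum_eq; intros j Hj.
      rewrite (pow_m1_complement j n Hj). unfold Rdiv.
      replace (- t - - x (n - j)%nat) with (- (t - x (n - j)%nat)) by ring.
      rewrite Rinv_opp. ring.
Qed.

Lemma berrut_ratio_le x n t d c (g : nat -> R) : 0 < d -> 0 < c ->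
  (forall i, (i <= n)%nat -> t <> x i) ->
  (forall i, (i <= n)%nat -> d / Rabs (t - x i) <= g i) ->
  c / d <= Rabs (sum_f_R0 (fun j => (-1) ^ j / (t - x j)) n) ->
  berrut_ratio x n t <= sum_f_R0 g n / c.
Proof.
  intros Hd Hc Ht Hg HD. unfold berrut_ratio.
  set (D := Rabs _) in *. set (Num := sum_f_R0 _ n).
  assert (Hcd : 0 < c / d) by (apply Rdiv_lt_0_compat; lra).
  assert (HNum : Num <= sum_f_R0 g n / d).
  { unfold Num, Rdiv at 2. rewrite Rmult_comm, scal_sum. apply sum_Rle; intros i Hi.
    assert (0 < Rabs (t - x i)) by (apply Rabs_pos_lt; specialize (Ht i Hi); lra).
    replace (1 / Rabs (t - x i)) with (d / Rabs (t - x i) * / d) by (field; lra).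
    apply Rmult_le_compat_r; [left; apply Rinv_0_lt_compat |]; auto. }
  assert (HNum0 : 0 <= Num).
  { apply sum_f_R0_nonneg; intros i Hi. apply Rdiv_le_0_compat; [lra|].
    apply Rabs_pos_lt; specialize (Ht i Hi); lra. }
  apply Rle_trans with ((sum_f_R0 g n / d) / (c / d)); [|right; field; lra].
  unfold Rdiv at 1. apply Rle_trans with (Num * / (c / d)).
  - apply Rmult_le_compat_l; [lra|]. apply Rinv_le_contravar; lra.
  - apply Rmult_le_compat_r; [left; apply Rinv_0_lt_compat|]; lra.
Qed.

(* For t > x_0 the alternating denominator is an alternating sum of decreasing terms,
   hence at least its first two terms 1/(t-x_0) - 1/(t-x_1). *)
Lemma exterior_denominator_lower x n t : (1 <= n)%nat ->
  (forall i, (i < n)%nat -> x (S i) < x i) -> x O < t ->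
  (x O - x 1%nat) / (t - x 1%nat) / (t - x O) <=
  Rabs (sum_f_R0 (fun j => (-1) ^ j / (t - x j)) n).
Proof.
  intros Hn Hx Ht.
  assert (Hbelow : forall i, (i <= n)%nat -> x i <= x O).
  { intros [|i] Hi; [lra|]. left; apply (decreasing_nodes x n Hx); lia. }
  destruct (alternating_sum_bounds n (fun j => 1 / (t - x j))) as [_ Hfirst].
  - intros i Hi. pose proof (Hx i Hi). pose proof (Hbelow i ltac:(lia)).
    apply Rdiv_le_cross; lra.
  - intros i Hi. pose proof (Hbelow i Hi). apply Rdiv_le_0_compat; lra.
  - specialize (Hfirst Hn). eapply Rle_trans; [|apply Rle_abs].
    replace (sum_f_R0 (fun j => (-1) ^ j / (t - x j)) n)
      with (sum_f_R0 (fun j => (-1) ^ j * (1 / (t - x j))) n)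
      by (apply sum_eq; intros; unfold Rdiv; ring).
    eapply Rle_trans; [|exact Hfirst].
    pose proof (Hbelow 1%nat Hn). right. field. lra.
Qed.

Lemma berrut_ratio_exterior x n t e A (g : nat -> R) : (1 <= n)%nat ->
  (forall i, (i < n)%nat -> x (S i) < x i) -> x O < t <= e ->
  e - x O <= A * (x O - x 1%nat) ->
  (forall i, (i <= n)%nat -> e - x O <= g i * (e - x i)) ->
  berrut_ratio x n t <= (1 + A) * sum_f_R0 g n.
Proof.
  intros Hn Hx Ht HA Hg.
  assert (Hbelow : forall i, (i <= n)%nat -> x i <= x O).
  { intros [|i] Hi; [lra|]. left; apply (decreasing_nodes x n Hx); lia. }
  set (d0 := t - x O). set (h0 := x O - x 1%nat).
  assert (Hh0 : 0 < h0) by (pose proof (Hx O ltac:(lia)); unfold h0; lra).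
  assert (Hd0 : 0 < d0) by (unfold d0; lra).
  assert (Hg0 : forall i, (i <= n)%nat -> 0 <= g i).
  { intros i Hi. pose proof (Hg i Hi). pose proof (Hbelow i Hi).
    apply Rmult_le_reg_r with (e - x i); lra. }
  apply Rle_trans with (sum_f_R0 g n / (h0 / (d0 + h0))).
  - apply berrut_ratio_le with d0; [lra | apply Rdiv_lt_0_compat; lra | | |].
    + intros i Hi E. pose proof (Hbelow i Hi). lra.
    + intros i Hi. pose proof (Hbelow i Hi). pose proof (Hg i Hi).
      rewrite Rabs_right by lra.
      apply Rle_trans with ((e - x O) / (e - x i)).
      * replace (t - x i) with ((x O - x i) + d0) by (unfold d0; ring).
        replace (e - x i) with ((x O - x i) + (e - x O)) by ring.
        apply ratio_shift_le; unfold d0; lra.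
      * apply Rmult_le_reg_r with (e - x i); [lra|].
        replace ((e - x O) / (e - x i) * (e - x i)) with (e - x O) by (field; lra). lra.
    + replace (d0 + h0) with (t - x 1%nat) by (unfold d0, h0; ring).
      apply exterior_denominator_lower; [exact Hn | exact Hx | lra].
  - assert (d0 <= A * h0) by (unfold d0, h0 in *; lra).
    assert (0 <= sum_f_R0 g n) by (apply sum_f_R0_nonneg; exact Hg0).
    replace (sum_f_R0 g n / (h0 / (d0 + h0))) with ((1 + d0 / h0) * sum_f_R0 g n)
      by (field; lra).
    apply Rmult_le_compat_r; [lra|].
    assert (d0 / h0 <= A); [|lra].
    apply Rmult_le_reg_r with h0; [lra|].
    replace (d0 / h0 * h0) with d0 by (field; lra). lra.
Qed.

Definition well_spaced (x : nat -> R) (n : nat) (C Rc : R) : Prop :=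
  (forall k j, (k <= n - 1)%nat -> (j <= k)%nat ->
     (x (S k) - x k) / (x (S k) - x j) <= C / INR (k + 1 - j)) /\
  (forall k j, (k <= n - 1)%nat -> (k + 1 <= j)%nat -> (j <= n)%nat ->
     (x (S k) - x k) / (x j - x k) <= C / INR (j - k)) /\
  (forall k, (1 <= k)%nat -> (k <= n - 1)%nat ->
     1 / Rc <= (x (S k) - x k) / (x k - x (k - 1)%nat) /\
     (x (S k) - x k) / (x k - x (k - 1)%nat) <= Rc).

Definition interior_weight (C : R) (k i : nat) : R :=
  if lt_dec i k then C / INR (k + 1 - i)
  else if Nat.eq_dec i k then 1
  else C / INR (i - k).

Lemma harmonic_step C m : 0 <= C -> (2 <= m)%nat ->
  C / INR m <= C * (ln (INR m) - ln (INR (m - 1))).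
Proof.
  intros HC Hm. assert (H2 : 2 <= INR m) by (apply (le_INR 2) in Hm; simpl in Hm; lra).
  rewrite minus_INR by lia. simpl (INR 1).
  replace (C / INR m) with (C * (1 / INR m)) by (field; lra).
  apply Rmult_le_compat_l; [lra | apply inv_le_ln_diff; lra].
Qed.

Lemma interior_weight_sum C k n : (k < n)%nat -> 0 <= C ->
  sum_f_R0 (interior_weight C k) n <=
  1 + C + C * ln (INR (k + 1)) + C * ln (INR (n - k)).
Proof.
  intros Hk HC.
  set (F := fun i => if le_dec i k then - C * ln (INR (k + 1 - i))
                     else if Nat.eq_dec i (S k) then 1 else 1 + C + C * ln (INR (i - 1 - k))).
  assert (Fle : forall i, (i <= k)%nat -> F i = - C * ln (INR (k + 1 - i)))
    by (intros i Hi; unfold F; destruct (le_dec i k); [reflexivity | lia]).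
  assert (FSk : F (S k) = 1)
    by (unfold F; destruct (le_dec (S k) k); [lia|]; destruct (Nat.eq_dec (S k) (S k)); [reflexivity | lia]).
  assert (Fgt : forall i, (S (S k) <= i)%nat -> F i = 1 + C + C * ln (INR (i - 1 - k)))
    by (intros i Hi; unfold F; destruct (le_dec i k); [lia|]; destruct (Nat.eq_dec i (S k)); [lia | reflexivity]).
  apply Rle_trans with (F (S n) - F O).
  - apply sum_le_telescope. intros i Hi. unfold interior_weight.
    destruct (lt_dec i k) as [Hlt | Hge]; [|destruct (Nat.eq_dec i k) as [-> | Hne]].
    + rewrite !Fle by lia. replace (k + 1 - S i)%nat with (k + 1 - i - 1)%nat by lia.
      pose proof (harmonic_step C (k + 1 - i) HC ltac:(lia)). lra.
    + rewrite FSk, Fle by lia. replace (k + 1 - k)%nat with 1%nat by lia.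
      simpl INR; rewrite ln_1; lra.
    + destruct (Nat.eq_dec i (S k)) as [-> | Hne'].
      * rewrite FSk, Fgt by lia. replace (S (S k) - 1 - k)%nat with 1%nat by lia.
        replace (S k - k)%nat with 1%nat by lia. simpl INR; rewrite ln_1. lra.
      * rewrite !Fgt by lia. replace (S i - 1 - k)%nat with (i - k)%nat by lia.
        replace (i - 1 - k)%nat with (i - k - 1)%nat by lia.
        pose proof (harmonic_step C (i - k) HC ltac:(lia)). lra.
  - rewrite Fgt, Fle by lia. replace (S n - 1 - k)%nat with (n - k)%nat by lia.
    rewrite Nat.sub_0_r. lra.
Qed.

Section InteriorGap.

Variables (x : nat -> R) (n k : nat) (t : R).
Hypothesis Hx : forall i, (i < n)%nat -> x (S i) < x i.
Hypothesis Hk : (k < n)%nat.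
Hypothesis Ht : x (S k) < t < x k.

Lemma gap_nodes_above i : (i <= k)%nat -> x k <= x i.
Proof.
  intros Hi. destruct (Nat.eq_dec i k) as [-> | Hne]; [lra|].
  left; apply (decreasing_nodes x n Hx); lia.
Qed.

Lemma gap_nodes_below i : (S k <= i <= n)%nat -> x i <= x (S k).
Proof.
  intros Hi. destruct (Nat.eq_dec i (S k)) as [-> | Hne]; [lra|].
  left; apply (decreasing_nodes x n Hx); lia.
Qed.

Lemma gap_denominator_lower :
  let D := Rabs (sum_f_R0 (fun j => (-1) ^ j / (t - x j)) n) in
  (k = O -> 1 / (x k - t) <= D) /\
  ((1 <= k)%nat -> 1 / (x k - t) - 1 / (x (k - 1)%nat - t) <= D).
Proof.
  intros D. pose proof gap_nodes_above as Hl. pose proof gap_nodes_below as Hr.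
  set (A := sum_f_R0 (fun i => (-1) ^ i * (1 / (x (k - i)%nat - t))) k).
  set (B := sum_f_R0 (fun i => (-1) ^ i * (1 / (t - x (S k + i)%nat))) (n - S k)).
  assert (HAB : A + B <= D).
  { unfold D. rewrite <- (Rmult_1_l (Rabs _)), <- (pow_1_abs (S k)), <- Rabs_mult.
    eapply Rle_trans; [|apply Rle_abs]. right.
    replace (sum_f_R0 (fun j => (-1) ^ j / (t - x j)) n)
      with (sum_f_R0 (fun j => (-1) ^ j * (1 / (t - x j))) n)
      by (apply sum_eq; intros; unfold Rdiv; ring).
    rewrite alternating_sum_split by exact Hk. f_equal.
    apply sum_eq; intros i Hi. pose proof (Hl (k - i)%nat ltac:(lia)). field; lra. }
  assert (HB : 0 <= B).
  { apply (alternating_sum_bounds (n - S k) (fun i => 1 / (t - x (S k + i)%nat))).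
    - intros i Hi. replace (S k + S i)%nat with (S (S k + i)) by lia.
      pose proof (Hx (S k + i)%nat ltac:(lia)). pose proof (Hr (S k + i)%nat ltac:(lia)).
      apply Rdiv_le_cross; lra.
    - intros i Hi. pose proof (Hr (S k + i)%nat ltac:(lia)). apply Rdiv_le_0_compat; lra. }
  destruct (alternating_sum_bounds k (fun i => 1 / (x (k - i)%nat - t))) as [[HA _] HA1].
  - intros i Hi. replace (k - i)%nat with (S (k - S i)) by lia.
    pose proof (Hx (k - S i)%nat ltac:(lia)). pose proof (Hl (S (k - S i)) ltac:(lia)).
    apply Rdiv_le_cross; lra.
  - intros i Hi. pose proof (Hl (k - i)%nat ltac:(lia)). apply Rdiv_le_0_compat; lra.
  - split.
    + intros ->. replace (1 / (x O - t)) with A by (unfold A; simpl; ring). lra.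
    + intros Hk1. specialize (HA1 Hk1). simpl in HA1. rewrite Nat.sub_0_r in HA1.
      fold A in HA1. lra.
Qed.

Variables (C Rc : R).
Hypothesis Hws : well_spaced x n C Rc.
Hypothesis Hnear : x k - t <= t - x (S k).

Lemma gap_terms_near i : (i <= n)%nat -> (x k - t) / Rabs (t - x i) <= interior_weight C k i.
Proof.
  destruct Hws as [Hc1 [Hc2 _]]. intros Hi.
  set (dk := x k - t). set (h := x k - x (S k)).
  assert (Hdk : 0 < dk) by (unfold dk; lra).
  unfold interior_weight.
  destruct (lt_dec i k) as [Hlt | Hge]; [|destruct (Nat.eq_dec i k) as [-> | Hne]].
  - pose proof (gap_nodes_above i ltac:(lia)). rewrite Rabs_left1 by lra.
    eapply Rle_trans; [|apply (Hc1 k i); lia].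
    replace (- (t - x i)) with ((x i - x k) + dk) by (unfold dk; ring).
    replace ((x (S k) - x k) / (x (S k) - x i)) with (h / ((x i - x k) + h))
      by (unfold h; field; lra).
    apply ratio_shift_le; unfold dk, h; lra.
  - rewrite Rabs_left1 by lra. right; unfold dk; field; lra.
  - pose proof (gap_nodes_below i ltac:(lia)). rewrite Rabs_right by lra.
    eapply Rle_trans; [|apply (Hc2 k i); lia].
    replace (t - x i) with ((x k - x i) - dk) by (unfold dk; ring).
    replace ((x (S k) - x k) / (x i - x k)) with (h / (x k - x i)) by (unfold h; field; lra).
    apply ratio_shift_half_le; unfold dk, h; lra.
Qed.

(* Condition (3) makes the gap above x_k comparable to the gap (x_{k+1}, x_k). *)
Lemma gap_denominator_near : 0 <= Rc ->
  1 / (1 + Rc / 2) / (x k - t) <= Rabs (sum_f_R0 (fun j => (-1) ^ j / (t - x j)) n).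
Proof.
  intros HRc. destruct Hws as [_ [_ Hc3]].
  destruct gap_denominator_lower as [Hk0 Hk1].
  set (dk := x k - t) in *. set (h := x k - x (S k)).
  assert (Hdk : 0 < dk) by (unfold dk; lra).
  destruct (Nat.eq_dec k 0) as [Hk0' | Hk0'].
  - eapply Rle_trans; [|exact (Hk0 Hk0')].
    assert (1 / (1 + Rc / 2) <= 1 / 1) by (apply Rdiv_le_cross; lra).
    apply Rdiv_le_cross; nra.
  - eapply Rle_trans; [|exact (Hk1 ltac:(lia))].
    assert (Hh' : x k < x (k - 1)%nat)
      by (pose proof (Hx (k - 1)%nat ltac:(lia)); replace (S (k - 1)) with k in * by lia; lra).
    destruct (Hc3 k ltac:(lia) ltac:(lia)) as [_ Hratio].
    replace ((x (S k) - x k) / (x k - x (k - 1)%nat)) with (h / (x (k - 1)%nat - x k)) in Hratio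
      by (unfold h; field; lra).
    replace (x (k - 1)%nat - t) with (dk + (x (k - 1)%nat - x k)) by (unfold dk; ring).
    set (h' := x (k - 1)%nat - x k) in *.
    assert (Hh'0 : 0 < h') by (unfold h'; lra).
    assert (h <= Rc * h').
    { apply Rmult_le_reg_r with (/ h'); [apply Rinv_0_lt_compat; lra|].
      replace (Rc * h' * / h') with Rc by (field; lra). exact Hratio. }
    replace (1 / dk - 1 / (dk + h')) with (h' / (dk * (dk + h'))) by (field; lra).
    replace (1 / (1 + Rc / 2) / dk) with (2 / ((2 + Rc) * dk)) by (field; lra).
    assert (2 * dk <= Rc * h') by (unfold dk, h in *; lra).
    apply Rdiv_le_cross; nra.
Qed.

Lemma berrut_ratio_interior : 0 <= C -> 0 <= Rc ->
  berrut_ratio x n t <= (1 + Rc / 2) * (1 + C + C * ln (INR (k + 1)) + C * ln (INR (n - k))).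
Proof.
  intros HC HRc.
  apply Rle_trans with (sum_f_R0 (interior_weight C k) n / (1 / (1 + Rc / 2))).
  - apply berrut_ratio_le with (x k - t);
      [lra | apply Rdiv_lt_0_compat; lra | | exact gap_terms_near | exact (gap_denominator_near HRc)].
    intros i Hi E. destruct (le_lt_dec i k) as [Hik | Hik];
      [pose proof (gap_nodes_above i Hik) | pose proof (gap_nodes_below i ltac:(lia))]; lra.
  - replace (sum_f_R0 (interior_weight C k) n / (1 / (1 + Rc / 2)))
      with ((1 + Rc / 2) * sum_f_R0 (interior_weight C k) n) by (field; lra).
    apply Rmult_le_compat_l; [lra | apply interior_weight_sum; auto].
Qed.

End InteriorGap.

Definition cheb_node (N k : nat) : R := cos (INR k * PI / INR N).

(* Half the angular step: cheb_node N k = cos (2 k u). *)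
Definition cheb_step (N : nat) : R := PI / (2 * INR N).

Lemma cheb_step_pos N : (0 < N)%nat -> 0 < cheb_step N.
Proof.
  intros HN. unfold cheb_step. apply Rdiv_lt_0_compat; [exact PI_RGT_0|].
  assert (0 < INR N) by (apply lt_0_INR; lia). lra.
Qed.

Definition fold_dist (N m : nat) : nat := Nat.min m (2 * N - m).

(* cheb_node N p - cheb_node N q is of the order (fold_dist N (p+q)) (q-p) u^2. *)
Definition cheb_weight (N p q : nat) : nat := (fold_dist N (p + q) * (q - p))%nat.

Lemma sin_multiple_bounds N m : (0 < N)%nat -> (m <= 2 * N)%nat ->
  2 / PI * INR (fold_dist N m) * cheb_step N <= sin (INR m * cheb_step N) <=
  INR (fold_dist N m) * cheb_step N.
Proof.
  intros HN Hm. pose proof PI_gt_3.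
  assert (HNr : 0 < INR N) by (apply lt_0_INR; lia).
  pose proof (cheb_step_pos N HN) as Hu.
  assert (HuN : INR N * cheb_step N = PI / 2) by (unfold cheb_step; field; lra).
  (* reduce to an angle in [0, PI/2] by the symmetry sin (PI - a) = sin a *)
  assert (Hsym : sin (INR m * cheb_step N) = sin (INR (fold_dist N m) * cheb_step N)).
  { unfold fold_dist. destruct (le_lt_dec m N) as [Hle | Hlt].
    - rewrite Nat.min_l by lia. reflexivity.
    - rewrite Nat.min_r by lia. rewrite <- sin_PI_x. f_equal.
      rewrite minus_INR, mult_INR by lia. simpl (INR 2). nra. }
  assert (Hf : INR (fold_dist N m) <= INR N) by (apply le_INR; unfold fold_dist; lia).
  pose proof (pos_INR (fold_dist N m)).
  rewrite Hsym, Rmult_assoc. split; [apply jordan | apply sin_le_id]; nra.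
Qed.

Lemma cheb_gap_bounds N p q : (0 < N)%nat -> (p <= q <= N)%nat ->
  8 / PI ^ 2 * INR (cheb_weight N p q) * cheb_step N ^ 2 <= cheb_node N p - cheb_node N q <=
  2 * INR (cheb_weight N p q) * cheb_step N ^ 2.
Proof.
  intros HN Hpq. pose proof PI_gt_3.
  assert (HNr : 0 < INR N) by (apply lt_0_INR; lia).
  pose proof (cheb_step_pos N HN) as Hu. set (u := cheb_step N) in *.
  assert (HuN : INR N * u = PI / 2) by (unfold u, cheb_step; field; lra).
  assert (Hnode : forall k, INR k * PI / INR N = 2 * INR k * u) by (intros; unfold u, cheb_step; field; lra).
  (* cos a - cos b = 2 sin ((a+b)/2) sin ((b-a)/2) *)
  assert (Hprod : cheb_node N p - cheb_node N q = 2 * sin (INR (p + q) * u) * sin (INR (q - p) * u)).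
  { unfold cheb_node. rewrite !Hnode, form2, plus_INR, minus_INR by lia.
    replace ((2 * INR p * u - 2 * INR q * u) / 2) with (- ((INR q - INR p) * u)) by field.
    replace ((2 * INR p * u + 2 * INR q * u) / 2) with ((INR p + INR q) * u) by field.
    rewrite sin_neg. ring. }
  destruct (sin_multiple_bounds N (p + q) HN ltac:(lia)) as [Hs1 Hs2]. fold u in Hs1, Hs2.
  assert (Hd : INR (q - p) <= INR N) by (apply le_INR; lia). pose proof (pos_INR (q - p)).
  assert (Ht1 : 2 / PI * (INR (q - p) * u) <= sin (INR (q - p) * u)) by (apply jordan; nra).
  assert (Ht2 : sin (INR (q - p) * u) <= INR (q - p) * u) by (apply sin_le_id; nra).
  pose proof (pos_INR (fold_dist N (p + q))).
  assert (H2PI : 0 < 2 / PI) by (apply Rdiv_lt_0_compat; lra).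
  assert (Hf0 : 0 <= 2 / PI * INR (fold_dist N (p + q)) * u) by (apply Rmult_le_pos; [apply Rmult_le_pos|]; lra).
  assert (Hd0 : 0 <= 2 / PI * (INR (q - p) * u)) by (apply Rmult_le_pos; nra).
  rewrite Hprod. unfold cheb_weight. rewrite mult_INR. split.
  - replace (8 / PI ^ 2 * (INR (fold_dist N (p + q)) * INR (q - p)) * u ^ 2)
      with (2 * ((2 / PI * INR (fold_dist N (p + q)) * u) * (2 / PI * (INR (q - p) * u))))
      by (field; lra).
    rewrite (Rmult_assoc 2 (sin _)). apply Rmult_le_compat_l; [lra|]. apply Rmult_le_compat; lra.
  - replace (2 * (INR (fold_dist N (p + q)) * INR (q - p)) * u ^ 2)
      with (2 * ((INR (fold_dist N (p + q)) * u) * (INR (q - p) * u))) by ring.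
    rewrite (Rmult_assoc 2 (sin _)). apply Rmult_le_compat_l; [lra|]. apply Rmult_le_compat; lra.
Qed.

Lemma cheb_weight_pos N p q : (p < q <= N)%nat -> (1 <= cheb_weight N p q)%nat.
Proof. intros. unfold cheb_weight, fold_dist. nia. Qed.

Lemma cheb_gap_ratio N p1 q1 p2 q2 (K m : nat) : (0 < N)%nat ->
  (p1 <= q1 <= N)%nat -> (p2 < q2 <= N)%nat -> (0 < m)%nat ->
  (cheb_weight N p1 q1 * m <= K * cheb_weight N p2 q2)%nat ->
  (cheb_node N p1 - cheb_node N q1) / (cheb_node N p2 - cheb_node N q2) <=
  PI ^ 2 / 4 * INR K / INR m.
Proof.
  intros HN H1 H2 Hm HW. pose proof PI_gt_3.
  destruct (cheb_gap_bounds N p1 q1 HN H1) as [_ Hup1].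
  destruct (cheb_gap_bounds N p2 q2 HN ltac:(lia)) as [Hlo2 _].
  pose proof (cheb_step_pos N HN) as Hu. set (u := cheb_step N) in *.
  assert (HW2 : 1 <= INR (cheb_weight N p2 q2)).
  { apply (le_INR 1). apply cheb_weight_pos. lia. }
  apply le_INR in HW. rewrite !mult_INR in HW.
  assert (Hmr : 0 < INR m) by (apply lt_0_INR; lia).
  assert (Hu2 : 0 < u ^ 2) by (apply pow_lt; lra).
  assert (HPI2 : 0 < PI ^ 2) by nra.
  pose proof (pos_INR K).
  set (W1 := INR (cheb_weight N p1 q1)) in *. set (W2 := INR (cheb_weight N p2 q2)) in *.
  assert (Hlo2p : 0 < 8 / PI ^ 2 * W2 * u ^ 2).
  { apply Rmult_lt_0_compat; [apply Rmult_lt_0_compat; [apply Rdiv_lt_0_compat|]|]; lra. }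
  apply Rdiv_le_cross; [lra | lra |].
  assert (Hkey : 2 * W1 * u ^ 2 * INR m <= PI ^ 2 / 4 * INR K * (8 / PI ^ 2 * W2 * u ^ 2)).
  { replace (PI ^ 2 / 4 * INR K * (8 / PI ^ 2 * W2 * u ^ 2)) with (2 * (INR K * W2) * u ^ 2)
      by (field; lra).
    replace (2 * W1 * u ^ 2 * INR m) with (2 * (W1 * INR m) * u ^ 2) by ring. nra. }
  assert (0 <= PI ^ 2 / 4 * INR K) by (apply Rmult_le_pos; lra).
  nra.
Qed.

Section WeightInequalities.
Local Open Scope nat_scope.

Lemma weight_cond1 N s pj pk pk1 m : (pj <= pk < pk1)%nat -> (pk1 <= N)%nat ->
  (pk1 - pk <= s + 1)%nat -> (m <= pk1 - pj)%nat ->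
  (cheb_weight N pk pk1 * m <= 2 * (s + 1) * cheb_weight N pj pk1)%nat.
Proof.
  intros. unfold cheb_weight, fold_dist.
  assert (Hf : Nat.min (pk + pk1) (2 * N - (pk + pk1)) <= 2 * Nat.min (pj + pk1) (2 * N - (pj + pk1))) by lia.
  set (a := Nat.min (pk + pk1) _) in *. set (b := Nat.min (pj + pk1) _) in *.
  assert (Hg : pk1 - pk <= s + 1) by lia. assert (Hm : m <= pk1 - pj) by lia.
  set (g := pk1 - pk) in *. set (G := pk1 - pj) in *. clearbody a b g G.
  replace (2 * (s + 1) * (b * G)) with ((2 * b) * (s + 1) * G) by ring.
  apply Nat.mul_le_mono; [apply Nat.mul_le_mono|]; assumption.
Qed.
Lemma weight_cond3 N s p0 p1 p2 : (p0 < p1 < p2)%nat -> (p2 <= N)%nat ->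
  (p1 - p0 <= s + 1)%nat -> (p2 - p1 <= s + 1)%nat ->
  (cheb_weight N p1 p2 * 1 <= (s + 1) * (s + 3) * cheb_weight N p0 p1)%nat.
Proof.
  intros. unfold cheb_weight, fold_dist.
  assert (Hb : Nat.min (p1 + p2) (2 * N - (p1 + p2)) <= Nat.min (p0 + p1) (2 * N - (p0 + p1)) + (p1 - p0) + (s + 1)) by lia.
  assert (Ha : 1 <= Nat.min (p0 + p1) (2 * N - (p0 + p1))) by lia.
  assert (Hg : 1 <= p1 - p0) by lia. assert (Hg' : p2 - p1 <= s + 1) by lia.
  set (a := Nat.min (p0 + p1) _) in *. set (b := Nat.min (p1 + p2) _) in *.
  set (g := p1 - p0) in *. set (g' := p2 - p1) in *. clearbody a b g g'.
  assert (Hsum : a + g + (s + 1) <= (s + 3) * a * g) by nia.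
  assert (b * g' <= (a + g + (s + 1)) * (s + 1)) by (apply Nat.mul_le_mono; lia).
  nia.
Qed.

End WeightInequalities.

Definition cheb_indexing (N n : nat) (x : nat -> R) (p : nat -> nat) : Prop :=
  (p n <= N)%nat /\ (forall j, (j < n)%nat -> (p j < p (S j))%nat) /\
  (forall j, (j <= n)%nat -> x j = cheb_node N (p j)).

(* The hypotheses of theorem7 provide such an indexing, increasing because cos is
   decreasing on [0, PI]. *)
Lemma cheb_indexing_exists N n x : (0 < N)%nat ->
  (forall j, (j <= n)%nat -> exists k, (k <= N)%nat /\ x j = cos (INR k * PI / INR N)) ->
  (forall j, (j < n)%nat -> x (S j) < x j) ->
  exists p, cheb_indexing N n x p.
Proof.
  intros HN Hx Hord.
  destruct (functional_choice (fun j k => (j <= n)%nat -> (k <= N)%nat /\ x j = cheb_node N k))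
    as [p Hp].
  { intros j. destruct (le_lt_dec j n) as [Hj | Hj].
    - destruct (Hx j Hj) as [k Hk]. exists k; auto.
    - exists O; intros; lia. }
  assert (Hangle : forall k, (k <= N)%nat -> 0 <= INR k * PI / INR N <= PI).
  { intros k Hk. pose proof PI_RGT_0. assert (0 < INR N) by (apply lt_0_INR; lia).
    assert (INR k <= INR N) by (apply le_INR; lia). pose proof (pos_INR k).
    split; [apply Rmult_le_pos; [nra | left; apply Rinv_0_lt_compat; lra]|].
    apply Rmult_le_reg_r with (INR N); [lra|]. unfold Rdiv.
    rewrite Rmult_assoc, Rinv_l by lra. nra. }
  exists p. split; [|split].
  - apply Hp; lia.
  - intros j Hj. destruct (Hp j ltac:(lia)) as [HjN Hxj]. destruct (Hp (S j) ltac:(lia)) as [HSjN HxSj].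
    destruct (le_lt_dec (p (S j)) (p j)) as [Hle | Hlt]; [exfalso | exact Hlt].
    assert (x j <= x (S j)); [|pose proof (Hord j Hj); lra].
    rewrite Hxj, HxSj. unfold cheb_node.
    destruct (Hangle _ HjN), (Hangle _ HSjN).
    apply cos_decr_1; try lra. unfold Rdiv. apply Rmult_le_compat_r.
    + left; apply Rinv_0_lt_compat, lt_0_INR; lia.
    + apply Rmult_le_compat_r; [pose proof PI_RGT_0; lra | apply le_INR; exact Hle].
  - intros j Hj. apply Hp; exact Hj.
Qed.

Section ChebyshevSubsets.

Variables (N s : nat) (x : nat -> R) (p : nat -> nat).
Hypothesis Hidx : cheb_indexing N (N - s) x p.

Local Notation n := (N - s)%nat.

Lemma index_spread i j : (i <= j <= n)%nat -> (p i + (j - i) <= p j)%nat.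
Proof.
  destruct Hidx as [_ [Hinc _]]. intros Hij. induction j as [|j IH].
  - replace i with O by lia. lia.
  - destruct (Nat.eq_dec i (S j)) as [-> | Hne]; [lia|].
    specialize (IH ltac:(lia)). specialize (Hinc j ltac:(lia)). lia.
Qed.

(* Each index is shifted by at most s, so consecutive indices differ by at most s+1. *)
Lemma index_range j : (j <= n)%nat -> (j <= p j <= j + s)%nat.
Proof.
  intros Hj. destruct Hidx as [HpN _].
  pose proof (index_spread O j ltac:(lia)). pose proof (index_spread j n ltac:(lia)). lia.
Qed.

Hypothesis HsN : (s < N)%nat.

Lemma cheb_gap i j : (i <= j <= n)%nat ->
  8 / PI ^ 2 * INR (cheb_weight N (p i) (p j)) * cheb_step N ^ 2 <= x i - x j <=
  2 * INR (cheb_weight N (p i) (p j)) * cheb_step N ^ 2.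
Proof.
  intros Hij. destruct Hidx as [_ [_ Hx]]. rewrite !Hx by lia.
  apply cheb_gap_bounds; [lia|]. pose proof (index_spread i j Hij).
  pose proof (index_range j ltac:(lia)). lia.
Qed.

Lemma cheb_min_gap i : (i < n)%nat -> 8 / PI ^ 2 * cheb_step N ^ 2 <= x i - x (S i).
Proof.
  intros Hi. destruct (cheb_gap i (S i) ltac:(lia)) as [Hlo _].
  pose proof PI_gt_3. pose proof (cheb_step_pos N ltac:(lia)).
  assert (1 <= INR (cheb_weight N (p i) (p (S i)))).
  { apply (le_INR 1), cheb_weight_pos. pose proof (index_spread i (S i) ltac:(lia)).
    pose proof (index_range (S i) ltac:(lia)). lia. }
  eapply Rle_trans; [|exact Hlo].
  replace (8 / PI ^ 2 * cheb_step N ^ 2) with (8 / PI ^ 2 * 1 * cheb_step N ^ 2) by ring.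
  apply Rmult_le_compat_r; [apply pow_le; lra|].
  apply Rmult_le_compat_l; [apply Rdiv_le_0_compat; nra | lra].
Qed.

Lemma cheb_decreasing i : (i < n)%nat -> x (S i) < x i.
Proof.
  intros Hi. pose proof (cheb_min_gap i Hi). pose proof PI_gt_3.
  assert (0 < 8 / PI ^ 2 * cheb_step N ^ 2); [|lra].
  apply Rmult_lt_0_compat; [apply Rdiv_lt_0_compat; nra | apply pow_lt, cheb_step_pos; lia].
Qed.

Lemma cheb_cond1 k j : (k <= n - 1)%nat -> (j <= k)%nat ->
  (x (S k) - x k) / (x (S k) - x j) <= PI ^ 2 * (INR s + 1) / 2 / INR (k + 1 - j).
Proof.
  intros Hk Hj. assert (Hjk : x (S k) < x j) by (apply (decreasing_nodes x n cheb_decreasing); lia).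
  replace ((x (S k) - x k) / (x (S k) - x j)) with ((x k - x (S k)) / (x j - x (S k)))
    by (field; lra).
  replace (PI ^ 2 * (INR s + 1) / 2) with (PI ^ 2 / 4 * INR (2 * (s + 1)))
    by (rewrite mult_INR, plus_INR; simpl; field).
  destruct Hidx as [_ [_ Hx]]. rewrite !Hx by lia.
  pose proof (index_spread j k ltac:(lia)). pose proof (index_spread j (S k) ltac:(lia)).
  pose proof (index_spread k (S k) ltac:(lia)).
  pose proof (index_range k ltac:(lia)). pose proof (index_range (S k) ltac:(lia)).
  apply cheb_gap_ratio; try lia. apply weight_cond1; lia.
Qed.

(* The upper half of condition (3); the lower half follows by reflection. *)
Lemma cheb_cond3_upper k : (1 <= k)%nat -> (k <= n - 1)%nat ->
  (x (S k) - x k) / (x k - x (k - 1)%nat) <= (INR s + 1) * (INR s + 3) * PI ^ 2 / 4.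
Proof.
  intros Hk1 Hk. assert (Hk' : x k < x (k - 1)%nat)
    by (apply (decreasing_nodes x n cheb_decreasing); lia).
  replace ((x (S k) - x k) / (x k - x (k - 1)%nat)) with ((x k - x (S k)) / (x (k - 1)%nat - x k))
    by (field; lra).
  replace ((INR s + 1) * (INR s + 3) * PI ^ 2 / 4) with (PI ^ 2 / 4 * INR ((s + 1) * (s + 3)) / INR 1)
    by (rewrite mult_INR, !plus_INR; simpl; field).
  destruct Hidx as [_ [_ Hx]]. rewrite !Hx by lia.
  pose proof (index_spread (k - 1) k ltac:(lia)). pose proof (index_spread k (S k) ltac:(lia)).
  pose proof (index_range (k - 1) ltac:(lia)). pose proof (index_range k ltac:(lia)).
  pose proof (index_range (S k) ltac:(lia)).
  apply cheb_gap_ratio; try lia. apply weight_cond3; lia.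
Qed.

Lemma cheb_top_distance i : (i <= n)%nat ->
  8 / PI ^ 2 * (INR (p O) + INR i) ^ 2 * cheb_step N ^ 2 <= 1 - x i /\
  1 - x O <= 2 * INR (p O) ^ 2 * cheb_step N ^ 2.
Proof.
  intros Hi. pose proof PI_gt_3. destruct Hidx as [_ [_ Hx]].
  assert (Hend : forall j, (j <= n)%nat ->
    8 / PI ^ 2 * INR (p j) ^ 2 * cheb_step N ^ 2 <= 1 - x j <= 2 * INR (p j) ^ 2 * cheb_step N ^ 2).
  { intros j Hj. pose proof (index_range j Hj).
    destruct (cheb_gap_bounds N O (p j) ltac:(lia) ltac:(lia)) as [Hlo Hup].
    replace (cheb_node N O) with 1 in Hlo, Hup
      by (unfold cheb_node; simpl INR; unfold Rdiv; rewrite !Rmult_0_l, cos_0; reflexivity).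
    replace (cheb_weight N O (p j)) with (p j * p j)%nat in Hlo, Hup
      by (unfold cheb_weight, fold_dist; rewrite Nat.min_l by lia; f_equal; lia).
    rewrite mult_INR, <- Hx in Hlo, Hup by exact Hj. split; nra. }
  split; [|exact (proj2 (Hend O ltac:(lia)))].
  destruct (Hend i Hi) as [Hlo _]. eapply Rle_trans; [|exact Hlo].
  assert (INR (p O) + INR i <= INR (p i)).
  { rewrite <- plus_INR. apply le_INR. pose proof (index_spread O i ltac:(lia)). lia. }
  pose proof (pos_INR (p O)). pose proof (pos_INR i). pose proof (cheb_step_pos N ltac:(lia)).
  assert ((INR (p O) + INR i) ^ 2 <= INR (p i) ^ 2) by (apply pow_incr; lra).
  apply Rmult_le_compat_r; [apply pow_le; lra|].
  apply Rmult_le_compat_l; [apply Rdiv_le_0_compat; nra | lra].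
Qed.

(* Exterior estimate next to x_0: t in (x_0, 1].  Here 1 <= p_0 <= s, and the endpoint
   distances make the weights PI^2/4 p_0^2/(p_0+i)^2 admissible. *)
Lemma cheb_exterior_top t : x O < t <= 1 ->
  berrut_ratio x n t <= (1 + PI ^ 2 / 4 * INR s ^ 2) * (PI ^ 2 / 4 * (INR s + 1)).
Proof.
  intros Ht. pose proof PI_gt_3. pose proof (pos_INR s).
  set (P := INR (p O)). set (u := cheb_step N).
  assert (Hu : 0 < u) by (apply cheb_step_pos; lia).
  assert (HPI2 : 0 < PI ^ 2) by nra.
  assert (HP1 : 1 <= P).
  { unfold P. destruct Hidx as [_ [_ Hx]]. destruct (p O) eqn:E; [|apply (le_INR 1); lia].
    exfalso. rewrite Hx, E in Ht by lia. unfold cheb_node in Ht.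
    simpl INR in Ht. unfold Rdiv in Ht. rewrite !Rmult_0_l, cos_0 in Ht. lra. }
  assert (HPs : P <= INR s) by (apply le_INR; pose proof (index_range O ltac:(lia)); lia).
  set (c := PI ^ 2 / 4 * P ^ 2).
  assert (Hc0 : 0 <= c) by (unfold c; apply Rmult_le_pos; [lra | apply pow_le; lra]).
  assert (Htop : 1 - x O <= c * (8 / PI ^ 2 * u ^ 2)).
  { destruct (cheb_top_distance O ltac:(lia)) as [_ Htop]. fold P u in Htop.
    replace (c * (8 / PI ^ 2 * u ^ 2)) with (2 * P ^ 2 * u ^ 2) by (unfold c; field; lra). lra. }
  eapply Rle_trans.
  - apply (berrut_ratio_exterior x n t 1 c (fun i => 1 / (P + INR i) ^ 2 * c));
      [lia | exact cheb_decreasing | lra | |].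
    + eapply Rle_trans; [exact Htop|]. apply Rmult_le_compat_l; [lra | apply cheb_min_gap; lia].
    + intros i Hi. pose proof (pos_INR i). destruct (cheb_top_distance i Hi) as [Hfar _].
      fold P u in Hfar.
      assert (HPi : 0 < (P + INR i) ^ 2) by (apply pow_lt; lra).
      eapply Rle_trans; [exact Htop|].
      replace (1 / (P + INR i) ^ 2 * c * (1 - x i)) with (c * ((1 - x i) / (P + INR i) ^ 2))
        by (field; lra).
      apply Rmult_le_compat_l; [lra|].
      apply Rmult_le_reg_r with ((P + INR i) ^ 2); [lra|].
      replace ((1 - x i) / (P + INR i) ^ 2 * (P + INR i) ^ 2) with (1 - x i) by (field; lra).
      lra.
  - rewrite <- scal_sum. pose proof (sum_inv_sqr_shift P n HP1).
    assert (0 <= sum_f_R0 (fun i => 1 / (P + INR i) ^ 2) n).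
    { apply sum_f_R0_nonneg; intros i _.
      apply Rdiv_le_0_compat; [lra|]. apply pow_lt. pose proof (pos_INR i); lra. }
    assert (P ^ 2 <= INR s ^ 2) by (apply pow_incr; lra).
    unfold c. rewrite Rmult_assoc.
    apply Rmult_le_compat; [nra | apply Rmult_le_pos; nra | nra |].
    apply Rmult_le_compat_l; lra.
Qed.

End ChebyshevSubsets.

Lemma cheb_node_reflect N q : (0 < N)%nat -> (q <= N)%nat -> cheb_node N (N - q) = - cheb_node N q.
Proof.
  intros HN Hq. unfold cheb_node. rewrite <- Rtrigo_facts.cos_pi_minus. f_equal.
  assert (0 < INR N) by (apply lt_0_INR; lia). rewrite minus_INR by exact Hq. field; lra.
Qed.

Lemma cheb_indexing_reflect N s x p : cheb_indexing N (N - s) x p -> (s < N)%nat ->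
  cheb_indexing N (N - s) (fun j => - x (N - s - j)%nat) (fun j => N - p (N - s - j))%nat.
Proof.
  intros Hidx HsN. pose proof Hidx as [_ [Hinc Hx]]. split; [|split].
  - lia.
  - intros j Hj. pose proof (index_range N s x p Hidx (N - s - j) ltac:(lia)).
    specialize (Hinc (N - s - S j)%nat ltac:(lia)).
    replace (S (N - s - S j)) with (N - s - j)%nat in Hinc by lia. lia.
  - intros j Hj. pose proof (index_range N s x p Hidx (N - s - j) ltac:(lia)).
    rewrite cheb_node_reflect, <- Hx by lia. reflexivity.
Qed.

(* Condition (2): condition (1) for the reflected subset. *)
Lemma cheb_cond2 N s x p : cheb_indexing N (N - s) x p -> (s < N)%nat ->
  forall k j, (k <= N - s - 1)%nat -> (k + 1 <= j)%nat -> (j <= N - s)%nat ->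
  (x (S k) - x k) / (x j - x k) <= PI ^ 2 * (INR s + 1) / 2 / INR (j - k).
Proof.
  intros Hidx HsN k j Hk Hkj Hjn.
  pose proof (cheb_cond1 N s _ _ (cheb_indexing_reflect N s x p Hidx HsN) HsN
                (N - s - 1 - k) (N - s - j) ltac:(lia) ltac:(lia)) as H.
  cbv beta in H.
  replace (N - s - S (N - s - 1 - k))%nat with k in H by lia.
  replace (N - s - (N - s - 1 - k))%nat with (S k) in H by lia.
  replace (N - s - (N - s - j))%nat with j in H by lia.
  replace (N - s - 1 - k + 1 - (N - s - j))%nat with (j - k)%nat in H by lia.
  replace (x (S k) - x k) with (- x k - - x (S k)) by ring.
  replace (x j - x k) with (- x k - - x j) by ring. exact H.
Qed.

(* Lower half of condition (3): the upper half for the reflected subset bounds the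
   reciprocal ratio. *)
Lemma cheb_cond3_lower N s x p : cheb_indexing N (N - s) x p -> (s < N)%nat ->
  forall k, (1 <= k)%nat -> (k <= N - s - 1)%nat ->
  1 / ((INR s + 1) * (INR s + 3) * PI ^ 2 / 4) <= (x (S k) - x k) / (x k - x (k - 1)%nat).
Proof.
  intros Hidx HsN k Hk1 Hk.
  pose proof (cheb_cond3_upper N s _ _ (cheb_indexing_reflect N s x p Hidx HsN) HsN
                (N - s - k) ltac:(lia) ltac:(lia)) as H.
  cbv beta in H.
  replace (N - s - S (N - s - k))%nat with (k - 1)%nat in H by lia.
  replace (N - s - (N - s - k))%nat with k in H by lia.
  replace (N - s - (N - s - k - 1))%nat with (S k) in H by lia.
  pose proof (decreasing_nodes x (N - s) (cheb_decreasing N s x p Hidx HsN)) as Hdec.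
  pose proof (Hdec k (S k) ltac:(lia)). pose proof (Hdec (k - 1)%nat k ltac:(lia)).
  replace ((- x (k - 1)%nat - - x k) / (- x k - - x (S k)))
    with (1 / ((x (S k) - x k) / (x k - x (k - 1)%nat))) in H by (field; lra).
  apply inv_le_swap; [| | exact H].
  - replace ((x (S k) - x k) / (x k - x (k - 1)%nat)) with ((x k - x (S k)) / (x (k - 1)%nat - x k))
      by (field; lra). apply Rdiv_lt_0_compat; lra.
  - pose proof (pos_INR s). pose proof PI_gt_3. assert (0 < PI ^ 2) by nra.
    apply Rdiv_lt_0_compat; [apply Rmult_lt_0_compat; [nra|] |]; lra.
Qed.

Lemma cheb_well_spaced N s x p : cheb_indexing N (N - s) x p -> (s < N)%nat ->
  well_spaced x (N - s) (PI ^ 2 * (INR s + 1) / 2) ((INR s + 1) * (INR s + 3) * PI ^ 2 / 4).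
Proof.
  intros Hidx HsN. split; [|split].
  - exact (cheb_cond1 N s x p Hidx HsN).
  - exact (cheb_cond2 N s x p Hidx HsN).
  - intros k Hk1 Hk. split; [exact (cheb_cond3_lower N s x p Hidx HsN k Hk1 Hk) |
                             exact (cheb_cond3_upper N s x p Hidx HsN k Hk1 Hk)].
Qed.

(* Interior estimate for Chebyshev subsets; t closer to x_{k+1} is handled by reflection. *)
Lemma cheb_interior N s x p k t : cheb_indexing N (N - s) x p -> (s < N)%nat ->
  (k < N - s)%nat -> x (S k) < t < x k ->
  berrut_ratio x (N - s) t <=
  (1 + (INR s + 1) * (INR s + 3) * PI ^ 2 / 4 / 2) *
  (1 + PI ^ 2 * (INR s + 1) / 2 + PI ^ 2 * (INR s + 1) / 2 * ln (INR (k + 1))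
     + PI ^ 2 * (INR s + 1) / 2 * ln (INR (N - s - k))).
Proof.
  intros Hidx HsN Hk Ht. pose proof PI_gt_3. pose proof (pos_INR s).
  assert (HC : 0 <= PI ^ 2 * (INR s + 1) / 2) by (assert (0 < PI ^ 2) by nra; nra).
  assert (HRc : 0 <= (INR s + 1) * (INR s + 3) * PI ^ 2 / 4) by (assert (0 < PI ^ 2) by nra; nra).
  destruct (Rle_dec (x k - t) (t - x (S k))) as [Hnear | Hfar].
  - apply (berrut_ratio_interior x (N - s) k t (cheb_decreasing N s x p Hidx HsN) Hk Ht);
      [exact (cheb_well_spaced N s x p Hidx HsN) | exact Hnear | exact HC | exact HRc].
  - pose proof (cheb_indexing_reflect N s x p Hidx HsN) as Hrefl.
    rewrite <- berrut_ratio_reflect.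
    eapply Rle_trans.
    + apply (berrut_ratio_interior _ (N - s) (N - s - 1 - k) (- t)
               (cheb_decreasing N s _ _ Hrefl HsN));
        [lia | | exact (cheb_well_spaced N s _ _ Hrefl HsN) | | exact HC | exact HRc];
        replace (N - s - S (N - s - 1 - k))%nat with k by lia;
        replace (N - s - (N - s - 1 - k))%nat with (S k) by lia; lra.
    + replace (N - s - 1 - k + 1)%nat with (N - s - k)%nat by lia.
      replace (N - s - (N - s - 1 - k))%nat with (k + 1)%nat by lia. right; ring.
Qed.

Lemma cheb_exterior_bottom N s x p t : cheb_indexing N (N - s) x p -> (s < N)%nat ->
  -1 <= t < x (N - s)%nat ->
  berrut_ratio x (N - s) t <= (1 + PI ^ 2 / 4 * INR s ^ 2) * (PI ^ 2 / 4 * (INR s + 1)).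
Proof.
  intros Hidx HsN Ht. rewrite <- berrut_ratio_reflect.
  apply (cheb_exterior_top N s _ _ (cheb_indexing_reflect N s x p Hidx HsN) HsN).
  rewrite Nat.sub_0_r. lra.
Qed.

Lemma exterior_constant_le S L : 0 <= S -> 1 <= L ->
  (1 + PI ^ 2 / 4 * S ^ 2) * (PI ^ 2 / 4 * (S + 1)) <=
  ((S + 1) * (S + 3) * PI ^ 2 / 4 + 1) * (1 + PI ^ 2 * (S + 1) * L).
Proof.
  intros HS HL. pose proof PI_gt_3. assert (HPI2 : 0 < PI ^ 2) by nra.
  assert (PI ^ 2 * (S + 1) * 1 <= PI ^ 2 * (S + 1) * L) by (apply Rmult_le_compat_l; nra).
  apply Rmult_le_compat; nra.
Qed.

Lemma interior_constant_le S L a b : 0 <= S -> 1 <= L -> 0 <= a <= L -> 0 <= b <= L ->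
  (1 + (S + 1) * (S + 3) * PI ^ 2 / 4 / 2) *
  (1 + PI ^ 2 * (S + 1) / 2 + PI ^ 2 * (S + 1) / 2 * a + PI ^ 2 * (S + 1) / 2 * b) <=
  ((S + 1) * (S + 3) * PI ^ 2 / 4 + 1) * (1 + PI ^ 2 * (S + 1) * L).
Proof.
  intros HS HL Ha Hb. pose proof PI_gt_3. assert (HPI2 : 0 < PI ^ 2) by nra.
  set (Rc := (S + 1) * (S + 3) * PI ^ 2 / 4). set (C := PI ^ 2 * (S + 1) / 2).
  assert (HRc : 2 <= Rc) by (unfold Rc; nra). assert (HC : 0 <= C) by (unfold C; nra).
  replace (PI ^ 2 * (S + 1)) with (2 * C) by (unfold C; field).
  apply Rle_trans with ((1 + Rc / 2) * (1 + C + 2 * C * L)); [apply Rmult_le_compat_l; nra|].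
  assert (0 <= Rc * C * (L - 1)) by (apply Rmult_le_pos; [apply Rmult_le_pos|]; lra).
  assert (0 <= C * (Rc / 2 - 1)) by (apply Rmult_le_pos; lra).
  nra.
Qed.

Lemma cheb_lebesgue_function_bound N s x p t : cheb_indexing N (N - s) x p -> (s + 2 < N)%nat ->
  -1 <= t <= 1 ->
  lebesgue_function x (N - s) t <=
  ((INR s + 1) * (INR s + 3) * PI ^ 2 / 4 + 1) * (1 + PI ^ 2 * (INR s + 1) * ln (INR (N - s))).
Proof.
  intros Hidx HsN Ht. pose proof (pos_INR s) as Hs.
  assert (HL : 1 <= ln (INR (N - s))).
  { eapply Rle_trans; [exact one_le_ln3|]. apply Rcomplements.ln_le; [lra|].
    replace 3 with (INR 3) by (simpl; ring). apply le_INR; lia. }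
  pose proof (exterior_constant_le (INR s) _ Hs HL) as Hext.
  destruct (classic (exists m, (m <= N - s)%nat /\ t = x m)) as [[m [Hm ->]] | Hoff].
  - rewrite lebesgue_function_at_node;
      [| exact (decreasing_nodes x (N - s) (cheb_decreasing N s x p Hidx ltac:(lia))) | exact Hm].
    eapply Rle_trans; [|exact Hext]. pose proof PI_gt_3. nra.
  - assert (Hnode : forall i, (i <= N - s)%nat -> t <> x i) by (intros i Hi E; apply Hoff; eauto).
    rewrite lebesgue_function_off_nodes by exact Hnode.
    destruct (Rlt_dec (x O) t) as [Htop | Hntop];
      [eapply Rle_trans; [apply (cheb_exterior_top N s x p Hidx ltac:(lia)); lra | exact Hext]|].
    destruct (Rlt_dec t (x (N - s)%nat)) as [Hbot | Hnbot];
      [eapply Rle_trans; [apply (cheb_exterior_bottom N s x p t Hidx ltac:(lia)); lra | exact Hext]|].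
    destruct (node_bracket x (N - s) t Hnode) as [k [Hk Hkt]].
    { pose proof (Hnode O ltac:(lia)). pose proof (Hnode (N - s)%nat ltac:(lia)). lra. }
    eapply Rle_trans; [apply (cheb_interior N s x p k t Hidx ltac:(lia) Hk Hkt)|].
    assert (Hlog : forall m, (1 <= m <= N - s)%nat -> 0 <= ln (INR m) <= ln (INR (N - s))).
    { intros m Hm. assert (1 <= INR m) by (apply (le_INR 1); lia). split.
      - rewrite <- ln_1. apply Rcomplements.ln_le; lra.
      - apply Rcomplements.ln_le; [lra | apply le_INR; lia]. }
    apply interior_constant_le; [exact Hs | exact HL | apply Hlog; lia | apply Hlog; lia].
Qed.

Theorem theorem7 (s N : nat) (x : nat -> R) :
  (s + 2 < N)%nat ->
  (forall j, (j <= N - s)%nat ->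
     exists k, (k <= N)%nat /\ x j = cos (INR k * PI / INR N)) ->
  (forall j, (j < N - s)%nat -> x (S j) < x j) ->
  let n := (N - s)%nat in
  let C := PI ^ 2 * (INR s + 1) / 2 in
  let Rc := (INR s + 1) * (INR s + 3) * PI ^ 2 / 4 in
  (forall k j, (k <= n - 1)%nat -> (j <= k)%nat ->
     (x (S k) - x k) / (x (S k) - x j) <= C / INR (k + 1 - j)) /\
  (forall k j, (k <= n - 1)%nat -> (k + 1 <= j)%nat -> (j <= n)%nat ->
     (x (S k) - x k) / (x j - x k) <= C / INR (j - k)) /\
  (forall k, (1 <= k)%nat -> (k <= n - 1)%nat ->
     1 / Rc <= (x (S k) - x k) / (x k - x (k - 1)%nat) /\
     (x (S k) - x k) / (x k - x (k - 1)%nat) <= Rc) /\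
  Rbar_le (lebesgue_constant x n)
    (Finite ((Rc + 1) * (1 + PI ^ 2 * (INR s + 1) * ln (INR (N - s))))).
Proof.
  intros HsN Hx Hord n C Rc.
  destruct (cheb_indexing_exists N (N - s) x ltac:(lia) Hx Hord) as [p Hidx].
  destruct (cheb_well_spaced N s x p Hidx ltac:(lia)) as (Hc1 & Hc2 & Hc3).
  split; [exact Hc1 | split; [exact Hc2 | split; [exact Hc3 |]]].
  apply Lub_Rbar_le_Finite. intros y (t & Ht & ->).
  exact (cheb_lebesgue_function_bound N s x p t Hidx HsN Ht).
Qed.
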